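(* Let $\lambda$ be a partition of $n$, and let $\mathcal{G}_{rf}(\lambda)$ be the set of polynomials obtained by reading the regular filling of $\lambda$, i.e. $\mathcal{G}_{rf}(\lambda)$ is the union, over all columns $c=0,1,\dots,\lambda_1-1$ of the Young diagram of $\lambda$ and over all entries $r$ appearing in column $c$ of the regular filling, of the sets $e_r(n-c)$ (note $n-c$ is the entry of the bottom cell of column $c$). Then the De Concini–Procesi ideal satisfies $\mathcal{I}_\lambda=(\mathcal{G}_{rf}(\lambda))$.
   Context: $k$ is a field of characteristic $0$ and $R=k[x_1,\dots,x_n]$. For a set $S$ of variables, $e_r(S)$ is the $r$-th elementary symmetric polynomial in the variables of $S$ ($e_0=1$, and $e_r(S)=0$ if $r>|S|$). For $1\le m\le n$, $e_r(m)$ denotes the set $\{e_r(S): S\subseteq\{x_1,\dots,x_n\},\ |S|=m\}$. A partition $\lambda=(\lambda_1\ge\lambda_2\ge\cdots)$ of $n$ has conjugate $\lambda'$ with $\lambda'_i=\#\{j:\lambda_j\ge i\}$ (so $\lambda'_i=0$ for $i>\lambda_1$). The Young diagram of $\lambda$ is drawn with rows counted from the bottom: the bottom row has $\lambda_1$ cells, the next $\lambda_2$, etc., left-justified; columns are numbered $0,1,\dots,\lambda_1-1$ from left to right, and column $c$ has height $\lambda'_{c+1}$. For $1\le m\le n$ put $\delta_m(\lambda)=\lambda'_n+\lambda'_{n-1}+\cdots+\lambda'_{n-m+1}$. The De Concini–Procesi ideal $\mathcal{I}_\lambda\subseteq R$ is the ideal generated by all elements of the sets $e_r(m)$ with $1\le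 m\le n$ and $m\ge r>m-\delta_m(\lambda)$ (Tanisaki's generating set). The regular filling of $\lambda$ places the numbers $1,\dots,n$ in the cells as follows: for each column $c$, the bottom cell of column $c$ receives $n-c$, and the remaining $\lambda'_{c+1}-1$ cells of column $c$ receive, from top to bottom, the consecutive integers $1+\sum_{d<c}(\lambda'_{d+1}-1),\dots,\sum_{d\le c}(\lambda'_{d+1}-1)$ (i.e. the non-bottom cells are filled with $1,2,\dots$ column by column from left to right, top to bottom within each column, and the bottom row is filled last, from right to left). *)

From HB Require Import structures.
From mathcomp Require Import all_boot all_order all_algebra.
From mathcomp Require Import mpoly.
Unset Printing Implicit Defensive.
Import GRing.Theory.
Local Open Scope ring_scope.

(* Variables x_1..x_n are 'X_i for i : 'I_n (x_{i+1} = 'X_i). *)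

Definition esymS (k : fieldType) (n : nat) (S : {set 'I_n}) (r : nat)
  : {mpoly k[n]} :=
  \sum_(T : {set 'I_n} | (T \subset S) && (#|T| == r)) \prod_(i in T) 'X_i.

Definition in_esym_m (k : fieldType) (n r m : nat) (p : {mpoly k[n]}) : Prop :=
  exists S : {set 'I_n}, #|S| = m /\ p = @esymS k n S r.

Definition ideal_gen (k : fieldType) (n : nat) (P : {mpoly k[n]} -> Prop)
  (p : {mpoly k[n]}) : Prop :=
  exists l : seq ({mpoly k[n]} * {mpoly k[n]}),
    (forall q, q \in l -> P q.2) /\ p = \sum_(q <- l) q.1 * q.2.

Definition is_partition (n : nat) (la : seq nat) : Prop :=
  [/\ sorted geq la, all (fun x => 0 < x)%N la & sumn la = n].

(* conjugate: la'_i = #{ j : la_j >= i } (1-indexed i) *)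
Definition conj_part (la : seq nat) (i : nat) : nat :=
  count (fun x => i <= x)%N la.

Definition delta (n : nat) (la : seq nat) (m : nat) : nat :=
  (\sum_(n - m + 1 <= i < n + 1) conj_part la i)%N.

Definition tanisaki_gen (k : fieldType) (n : nat) (la : seq nat)
  (p : {mpoly k[n]}) : Prop :=
  exists m r : nat, [/\ (1 <= m <= n)%N, (r <= m)%N,
     (m < r + delta n la m)%N  (* i.e. r > m - delta_m *)
     & @in_esym_m k n r m p].

Definition DP_ideal (k : fieldType) (n : nat) (la : seq nat) :=
  @ideal_gen k n (tanisaki_gen k n la).

(* entries of column c (0-indexed) in the regular filling of la *)
Definition rf_offset (la : seq nat) (c : nat) : nat :=
  (\sum_(d < c) (conj_part la d.+1 - 1))%N.

Definition rf_column_entry (n : nat) (la : seq nat) (c r : nat) : bool :=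
  (r == (n - c)%N) ||
  ((rf_offset la c < r) && (r <= rf_offset la c + (conj_part la c.+1 - 1)))%N.

Definition Grf (k : fieldType) (n : nat) (la : seq nat)
  (p : {mpoly k[n]}) : Prop :=
  exists c r : nat, [/\ (c < head 0%N la)%N, rf_column_entry n la c r
     & @in_esym_m k n r (n - c)%N p].

From HB Require Import structures.
From mathcomp Require Import all_boot all_order all_algebra.
From mathcomp Require Import mpoly.
From mathcomp Require Import zify.

Set Implicit Arguments.
Unset Strict Implicit.
Unset Printing Implicit Defensive.

(* Write m = n - c. Since the conjugate partition sums to n, the first c
   columns of the diagram hold rf_offset la c + c cells and the remaining
   ones delta_m cells, so rf_offset la c + delta_m = m: Tanisaki's condition
   r > m - delta_m on e_r(m) reads r > rf_offset la c, and the entries of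
   column c are exactly the least admissible values of r together with r = m.
   The remaining generators e_r(m), rf_offset la c.+1 < r < m, are recovered
   from those of column c + 1 through
       \sum_(x in S) e_r(S \ x) = (|S| - r) e_r(S),
   where |S| - r is invertible in characteristic 0. *)

Lemma sum_ltn_ord (N x : nat) : (\sum_(i < N) (i < x : nat))%N = minn N x.
Proof.
elim: N => [|N IH]; first by rewrite big_ord0 min0n.
by rewrite big_ord_recr /= IH; case: (ltnP N x) => /= h; lia.
Qed.

Lemma sum_conj_part (la : seq nat) (N : nat) : all (fun x => x <= N)%N la ->
  (\sum_(i < N) conj_part la i.+1)%N = sumn la.
Proof.
elim: la => [_|x la IH /= /andP[xN laN]]; first by rewrite big1.
rewrite /conj_part /= big_split /= -IH //; congr (_ + _)%N.
by rewrite (eq_bigr (fun i : 'I_N => (i < x : nat))) // sum_ltn_ord; lia.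
Qed.

Lemma sorted_geq_head (la : seq nat) :
  sorted geq la -> all (fun x => x <= head 0 la)%N la.
Proof.
case: la => //= x la x_la; rewrite leqnn /=.
have geq_trans : transitive geq by move=> a b c ba cb; apply: leq_trans cb ba.
exact: order_path_min geq_trans x_la.
Qed.

Lemma head_leq_sumn (la : seq nat) : (head 0 la <= sumn la)%N.
Proof. by case: la => //= x la; apply: leq_addr. Qed.

Lemma conj_part_gt0 (la : seq nat) (c : nat) :
  (c < head 0 la)%N -> (0 < conj_part la c.+1)%N.
Proof. by rewrite /conj_part; case: la => //= x la ->. Qed.

Lemma conj_part_eq0 (la : seq nat) (i : nat) :
  all (fun x => x <= head 0 la)%N la -> (head 0 la < i)%N -> conj_part la i = 0%N.
Proof.
move=> la_le lt_i; apply/eqP; rewrite -leqn0 leqNgt -has_count.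
by apply/hasP => -[x /(allP la_le) x_le /= i_x]; lia.
Qed.

Lemma rf_offsetS (la : seq nat) (c : nat) :
  rf_offset la c.+1 = (rf_offset la c + (conj_part la c.+1 - 1))%N.
Proof. by rewrite /rf_offset big_ord_recr. Qed.

Lemma rf_offset_addn (la : seq nat) (c : nat) : (c <= head 0 la)%N ->
  (rf_offset la c + c = \sum_(d < c) conj_part la d.+1)%N.
Proof.
elim: c => [|c IH] le_c; first by rewrite /rf_offset !big_ord0.
rewrite rf_offsetS big_ord_recr /= -IH; last lia.
by have := conj_part_gt0 le_c; lia.
Qed.

Section RegularFilling.
Variables (n : nat) (la : seq nat).
Hypothesis la_part : is_partition n la.
Local Notation lam1 := (head 0%N la).

Lemma head_part_leq : (lam1 <= n)%N.
Proof. by case: la_part => _ _ <-; apply: head_leq_sumn. Qed.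

Lemma rf_offset_delta (c : nat) : (c <= lam1)%N ->
  (rf_offset la c + delta n la (n - c) = n - c)%N.
Proof.
move=> le_c; have le_cn := leq_trans le_c head_part_leq.
case: la_part => /sorted_geq_head la_le _ sum_la.
suff: (rf_offset la c + c + delta n la (n - c) = n)%N by lia.
rewrite rf_offset_addn // /delta (_ : n - (n - c) + 1 = c + 1)%N; last lia.
rewrite big_addn addnK; under eq_bigr do rewrite addn1.
rewrite -(big_mkord xpredT (fun d => conj_part la d.+1)) -big_cat_nat //.
rewrite big_mkord sum_conj_part ?sum_la //.
by apply: sub_all la_le => x /= le_x; apply: leq_trans le_x head_part_leq.
Qed.

Lemma delta_eq0 (c : nat) : (lam1 <= c <= n)%N -> delta n la (n - c) = 0%N.
Proof.
case/andP=> le_c le_cn; case: la_part => /sorted_geq_head la_le _ _.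
rewrite /delta big1_seq // => i /andP[_]; rewrite mem_iota => /andP[le_i _].
by apply: conj_part_eq0 => //; lia.
Qed.

Lemma rf_offset_head : rf_offset la lam1 = (n - lam1)%N.
Proof.
have := rf_offset_delta (leqnn _).
by rewrite delta_eq0 ?leqnn ?head_part_leq // addn0.
Qed.

Lemma tanisaki_boundE (c r : nat) : (c <= lam1)%N ->
  (n - c < r + delta n la (n - c))%N = (rf_offset la c < r)%N.
Proof. by move/rf_offset_delta; lia. Qed.

Lemma rf_column_entry_range (c r : nat) : (c < lam1)%N ->
  rf_column_entry n la c r -> (rf_offset la c < r <= n - c)%N.
Proof.
move=> lt_c entry_r; have := head_part_leq; have := rf_offset_delta lt_c.
have := conj_part_gt0 lt_c.
by move: entry_r; rewrite rf_offsetS /rf_column_entry => /orP[/eqP|/andP[]]; lia.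
Qed.

End RegularFilling.

Import GRing.Theory.
Local Open Scope ring_scope.

Section IdealGen.
Variables (k : fieldType) (n : nat).
Implicit Types (P Q : {mpoly k[n]} -> Prop) (p : {mpoly k[n]}).
Local Notation ideal := (@ideal_gen k n).

Lemma ideal_gen0 P : ideal P 0.
Proof. by exists [::]; rewrite big_nil. Qed.

Lemma ideal_genD P p q : ideal P p -> ideal P q -> ideal P (p + q).
Proof.
move=> [l1 [P_l1 ->]] [l2 [P_l2 ->]]; exists (l1 ++ l2); rewrite big_cat.
by split=> // x; rewrite mem_cat => /orP[/P_l1|/P_l2].
Qed.

Lemma ideal_genMl P a p : ideal P p -> ideal P (a * p).
Proof.
move=> [l [P_l ->]]; exists [seq (a * q.1, q.2) | q <- l]; split.
  by move=> q /mapP[q' /P_l P_q' ->].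
by rewrite big_map mulr_sumr; apply: eq_bigr => q _; rewrite mulrA.
Qed.

Lemma ideal_genZ P (a : k) p : ideal P p -> ideal P (a *: p).
Proof. by rewrite -mul_mpolyC; apply: ideal_genMl. Qed.

Lemma ideal_gen_base P p : P p -> ideal P p.
Proof.
move=> P_p; exists [:: (1, p)]; rewrite big_seq1 mul1r.
by split=> // q; rewrite inE => /eqP ->.
Qed.

Lemma ideal_gen_sum P (I : finType) (A : pred I) (F : I -> {mpoly k[n]}) :
  (forall i, A i -> ideal P (F i)) -> ideal P (\sum_(i | A i) F i).
Proof. by move=> PF; apply: big_ind; [apply: ideal_gen0 | apply: ideal_genD |]. Qed.

Lemma ideal_gen_trans P Q p :
  (forall q, P q -> ideal Q q) -> ideal P p -> ideal Q p.
Proof.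
move=> PQ [l [P_l ->]]; rewrite big_seq.
apply: (big_ind (ideal Q)); [exact: ideal_gen0 | exact: ideal_genD |].
by move=> q /P_l /PQ; apply: ideal_genMl.
Qed.

(* Each r-subset T of S is counted once for every x in S \ T. *)
Lemma sum_esymS_setD1 (S : {set 'I_n}) (r : nat) :
  \sum_(x in S) @esymS k n (S :\ x) r = @esymS k n S r *+ (#|S| - r).
Proof.
rewrite /esymS -sumrMnl.
transitivity (\sum_(x in S) \sum_(T : {set 'I_n} | (T \subset S) && (#|T| == r))
    (if x \notin T then \prod_(i in T) 'X_i else 0 : {mpoly k[n]})).
  apply: eq_bigr => x _; rewrite -big_mkcondr; apply: eq_bigl => T.
  by rewrite subsetD1 andbAC.
rewrite exchange_big /=; apply: eq_bigr => T /andP[sub_TS /eqP card_T].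
rewrite -big_mkcondr /= (eq_bigl (fun x => x \in S :\: T)); last first.
  by move=> x; rewrite in_setD andbC.
by rewrite sumr_const cardsD (setIidPr sub_TS) card_T.
Qed.

End IdealGen.

Section DeConciniProcesi.
Variables (k : fieldType) (n : nat) (la : seq nat).
Hypothesis char_k : [pchar k] =i pred0.
Hypothesis la_part : is_partition n la.
Local Notation lam1 := (head 0%N la).
Local Notation ideal_Grf := (@ideal_gen k n (@Grf k n la)).

Lemma Grf_tanisaki_gen p : @Grf k n la p -> tanisaki_gen k n la p.
Proof.
case=> c [r [lt_c entry_r esym_p]]; exists (n - c)%N, r.
have := head_part_leq la_part.
have := tanisaki_boundE la_part r (ltnW lt_c).
have := rf_column_entry_range la_part lt_c entry_r.
by split=> //; lia.
Qed.

Lemma esymS_in_ideal_Grf (c : nat) (S : {set 'I_n}) (r : nat) :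
  (c <= lam1)%N -> #|S| = (n - c)%N -> (rf_offset la c < r <= n - c)%N ->
  ideal_Grf (@esymS k n S r).
Proof.
move: {2}(lam1 - c)%N (erefl (lam1 - c)%N) => j.
elim: j c S => [|j IH] c S def_j le_c card_S /andP[lt_r le_r].
  have c_lam1 : c = lam1 by lia.
  by move: lt_r; rewrite c_lam1 (rf_offset_head la_part); lia.
have lt_c : (c < lam1)%N by lia.
have [entry_r | not_entry_r] := boolP (rf_column_entry n la c r).
  by apply: ideal_gen_base; exists c, r; split=> //; exists S.
have /andP[lt_rS lt_rm] : (rf_offset la c.+1 < r < n - c)%N.
  by move: not_entry_r; rewrite rf_offsetS /rf_column_entry lt_r; lia.
have nz : ((#|S| - r)%:R : k) != 0 by move/pcharf0P: char_k => ->; lia.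
rewrite -[@esymS k n S r]scale1r -(mulVf nz) -scalerA scaler_nat -sum_esymS_setD1.
apply/ideal_genZ/ideal_gen_sum => x x_S; apply: (IH c.+1); try lia.
by move: card_S; rewrite (cardsD1 x S) x_S; lia.
Qed.

Lemma tanisaki_gen_in_ideal_Grf p : tanisaki_gen k n la p -> ideal_Grf p.
Proof.
case=> m [r [/andP[_ le_m] le_r bound [S [card_S ->]]]].
have def_m : m = (n - (n - m))%N by lia.
rewrite def_m in bound card_S le_r.
have [lt_c | le_c] := ltnP (n - m)%N lam1.
  rewrite (tanisaki_boundE la_part) ?(ltnW lt_c) // in bound.
  by apply: esymS_in_ideal_Grf (ltnW lt_c) card_S _; rewrite bound le_r.
by move: bound; rewrite (delta_eq0 la_part) ?le_c ?leq_subr //; lia.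
Qed.

End DeConciniProcesi.

Theorem mainTheorem3 (k : fieldType) (n : nat) (la : seq nat) :
  [pchar k]%R =i pred0 ->
  is_partition n la ->
  forall p : {mpoly k[n]}, @DP_ideal k n la p <-> @ideal_gen k n (@Grf k n la) p.
Proof.
move=> char_k la_part p; split; apply: ideal_gen_trans => q.
  exact: tanisaki_gen_in_ideal_Grf.
by move/(Grf_tanisaki_gen la_part); apply: ideal_gen_base.
Qed.
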